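(* Let $T$ be an $\omega_2$-Kurepa-tree, for each $\alpha<\omega_2$ let $\xi\mapsto\tau(\alpha,\xi)$ be a map from $\omega_1$ onto the level $T_\alpha$, and let $A_\iota$ ($\iota<\omega_2$) be unbounded subsets of $\omega_2$. Then there is a cofinal branch $b$ through $T$ that oscillates on every $A_\iota$, $\iota<\omega_2$.
   Context: An $\omega_2$-Kurepa-tree is a tree of height $\omega_2$ all of whose levels have size $\leq\aleph_1$ and which has at least $\aleph_3$ cofinal ($\omega_2$-)branches. Given the enumeration $\tau$, a cofinal branch $b$ is identified with the function $b:\omega_2\to\omega_1$ where $b(\alpha)$ is the least $\xi$ such that $\tau(\alpha,\xi)$ is the node of $b$ on level $\alpha$. For unbounded $A\subseteq\omega_2$, $b$ oscillates on $A$ if for all $\alpha<\omega_2$ and all $\zeta<\omega_1$ there are $\beta>\alpha$ with $\beta\in A$ and $\xi>\zeta$ such that $b(\beta)=\xi$. *)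

(* Ordinals omega_1, omega_2 are represented abstractly by
   well-ordered types characterised up to isomorphism by their cardinal
   properties. *)
From Stdlib Require Import Relations Wellfounded.

Definition strict_well_order {W : Type} (lt : W -> W -> Prop) : Prop :=
  (forall x, ~ lt x x) /\
  (forall x y z, lt x y -> lt y z -> lt x z) /\
  (forall x y, lt x y \/ x = y \/ lt y x) /\
  well_founded lt.

Definition injects (X Y : Type) : Prop :=
  exists f : X -> Y, forall x y, f x = f y -> x = y.

Definition is_omega1 (W : Type) (lt : W -> W -> Prop) : Prop :=
  strict_well_order lt /\
  (forall a : W, injects {x : W | lt x a} nat) /\
  ~ injects W nat.

Definition is_omega2 (W1 W2 : Type) (lt2 : W2 -> W2 -> Prop) : Prop :=
  strict_well_order lt2 /\
  (forall a : W2, injects {x : W2 | lt2 x a} W1) /\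
  ~ injects W2 W1.

(* A tree (N, ltT) of height omega_2 with rank function ht : N -> W2:
   ltT is a strict partial order and, for every node t, ht maps the set of
   predecessors of t order-isomorphically onto the ordinal ht t
   (i.e. pred(t) is well-ordered of order type ht t). Every level is nonempty
   and there are no nodes of height >= omega_2 (ht lands in W2). *)
Definition tree_of_height {W2 N : Type} (lt2 : W2 -> W2 -> Prop)
    (ltT : N -> N -> Prop) (ht : N -> W2) : Prop :=
  (forall x, ~ ltT x x) /\
  (forall x y z, ltT x y -> ltT y z -> ltT x z) /\
  (forall t s s', ltT s t -> ltT s' t -> ltT s s' \/ s = s' \/ ltT s' s) /\
  (forall t s s', ltT s t -> ltT s' t -> (ltT s s' <-> lt2 (ht s) (ht s'))) /\
  (forall t s, ltT s t -> lt2 (ht s) (ht t)) /\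
  (forall t a, lt2 a (ht t) -> exists s, ltT s t /\ ht s = a) /\
  (forall a : W2, exists t, ht t = a).

Definition cofinal_branch {W2 N : Type} (ltT : N -> N -> Prop) (ht : N -> W2)
    (B : N -> Prop) : Prop :=
  (forall s t, B s -> B t -> ltT s t \/ s = t \/ ltT t s) /\
  (forall s t, B t -> ltT s t -> B s) /\
  (forall a : W2, exists t, B t /\ ht t = a).

(* omega_2-Kurepa tree: tree of height omega_2, levels of size <= aleph_1,
   at least aleph_3 (i.e. more than aleph_2) cofinal branches. *)
Definition kurepa_tree {W1 W2 N : Type} (lt2 : W2 -> W2 -> Prop)
    (ltT : N -> N -> Prop) (ht : N -> W2) : Prop :=
  tree_of_height lt2 ltT ht /\
  (forall a : W2, injects {t : N | ht t = a} W1) /\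
  (forall f : (N -> Prop) -> W2,
     exists B1 B2, cofinal_branch ltT ht B1 /\ cofinal_branch ltT ht B2 /\
       (exists t, ~ (B1 t <-> B2 t)) /\ f B1 = f B2).

(* b(beta) = xi, where b(beta) is the least xi such that tau(beta,xi) is the
   node of B on level beta *)
Definition branch_val {W1 W2 N : Type} (lt1 : W1 -> W1 -> Prop)
    (tau : W2 -> W1 -> N) (B : N -> Prop) (beta : W2) (xi : W1) : Prop :=
  B (tau beta xi) /\ (forall xi', lt1 xi' xi -> ~ B (tau beta xi')).

Definition unbounded {W2 : Type} (lt2 : W2 -> W2 -> Prop) (A : W2 -> Prop) : Prop :=
  forall a, exists b, lt2 a b /\ A b.

Definition oscillates {W1 W2 N : Type} (lt1 : W1 -> W1 -> Prop)
    (lt2 : W2 -> W2 -> Prop) (tau : W2 -> W1 -> N) (B : N -> Prop)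
    (A : W2 -> Prop) : Prop :=
  forall (alpha : W2) (zeta : W1), exists (beta : W2) (xi : W1),
    lt2 alpha beta /\ A beta /\ lt1 zeta xi /\ branch_val lt1 tau B beta xi.

(* Suppose no cofinal branch oscillates on every A_iota. Then every cofinal
   branch b fails at some witness (iota, alpha, zeta): b(beta) <= zeta for all
   beta > alpha in A_iota. Only aleph_1 branches fail at a given witness: the
   levels at which aleph_1 many branches split pairwise are bounded below
   omega_2, so on a level beta > alpha of A_iota above all of them these
   branches pass through pairwise distinct nodes tau(beta, xi) with xi <= zeta,
   of which there are countably many. With aleph_2 witnesses there are then
   only aleph_2 * aleph_1 = aleph_2 cofinal branches, contradicting the Kurepa
   property. The cardinal arithmetic behind this comes from the comparability
   of a well-order with an arbitrary set, by transfinite enumeration, and from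
   Goedel's well-ordering of pairs. *)
From Stdlib Require Import Classical ClassicalEpsilon FunctionalExtensionality
  PropExtensionality Cantor Relations Lexicographic_Product Inverse_Image.

Definition inj_on {X Y : Type} (P : X -> Prop) (f : X -> Y) : Prop :=
  forall x y, P x -> P y -> f x = f y -> x = y.

Lemma injects_trans (X Y Z : Type) : injects X Y -> injects Y Z -> injects X Z.
Proof.
  intros [f Hf] [g Hg]. exists (fun x => g (f x)). auto.
Qed.

Lemma injects_prod (X X' Y Y' : Type) :
  injects X X' -> injects Y Y' -> injects (X * Y) (X' * Y').
Proof.
  intros [f Hf] [g Hg]. exists (fun p => (f (fst p), g (snd p))).
  intros [x y] [x' y'] E; injection E as Ex Ey. f_equal; auto.
Qed.

Lemma inj_on_of_injects_sig (X Y : Type) (P : X -> Prop) (y0 : Y) :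
  injects {x | P x} Y -> exists f : X -> Y, inj_on P f.
Proof.
  intros [g Hg].
  exists (fun x => match excluded_middle_informative (P x) with
           | left p => g (exist _ x p) | right _ => y0 end).
  intros x y Px Py.
  destruct (excluded_middle_informative (P x)); [|contradiction].
  destruct (excluded_middle_informative (P y)); [|contradiction].
  intro E. exact (f_equal (@proj1_sig _ _) (Hg _ _ E)).
Qed.

Lemma option_injects_of_square (K : Type) (a b : K) :
  a <> b -> injects (K * K) K -> injects (option K) K.
Proof.
  intros ab [c Hc].
  exists (fun x => match x with Some x => c (x, b) | None => c (a, a) end).
  intros [x|] [y|] E; apply Hc in E; congruence.
Qed.

Lemma nat_square_injects : injects (nat * nat) nat.
Proof.
  exists to_nat. intros x y E.
  rewrite <- (cancel_of_to x), <- (cancel_of_to y), E. reflexivity.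
Qed.

Lemma option_nat_injects : injects (option nat) nat.
Proof.
  exists (fun x => match x with Some n => S n | None => 0 end).
  intros [x|] [y|] E; congruence.
Qed.

Lemma inj_on_of_fibers (X I K Z : Type) (P : X -> Prop) (Q : I -> X -> Prop) :
  inhabited I -> (forall x, P x -> exists i, Q i x) ->
  (forall i, exists e : X -> K, inj_on (Q i) e) -> injects (I * K) Z ->
  exists f : X -> Z, inj_on P f.
Proof.
  intros [i0] HPQ HQ [c Hc].
  assert (Hw : forall x, exists i, P x -> Q i x).
  { intro x. destruct (classic (P x)) as [Px|nPx].
    - destruct (HPQ x Px) as [i Hi]. eauto.
    - exists i0. contradiction. }
  destruct (choice _ Hw) as [w Hw'], (choice _ HQ) as [e He].
  exists (fun x => c (w x, e (w x) x)).
  intros x y Px Py E. apply Hc in E. injection E as Ew Ee.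
  rewrite <- Ew in Ee. apply (He (w x)); auto. rewrite Ew. auto.
Qed.

Lemma well_founded_minimal (X : Type) (R : X -> X -> Prop) (P : X -> Prop) :
  well_founded R -> forall x, P x -> exists y, P y /\ forall z, R z y -> ~ P z.
Proof.
  intros wf x. induction x as [x IH] using (well_founded_ind wf).
  intros Px. destruct (classic (exists z, R z x /\ P z)) as [[z [Rz Pz]]|Hn].
  - exact (IH z Rz Pz).
  - exists x. split; [exact Px|]. intros z Rz Pz. apply Hn; eauto.
Qed.

Lemma slexprod_total (X Y : Type) (RX : X -> X -> Prop) (RY : Y -> Y -> Prop) :
  (forall x x', RX x x' \/ x = x' \/ RX x' x) ->
  (forall y y', RY y y' \/ y = y' \/ RY y' y) ->
  forall p q, slexprod X Y RX RY p q \/ p = q \/ slexprod X Y RX RY q p.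
Proof.
  intros totX totY [x y] [x' y'].
  destruct (totX x x') as [h|[<-|h]]; [left; now constructor| |right; right; now constructor].
  destruct (totY y y') as [h|[<-|h]]; [left | right; left | right; right];
    now constructor.
Qed.

Section Enumeration.

Variables (X Y : Type) (R : X -> X -> Prop) (Q : Y -> Prop).
Hypothesis R_wf : well_founded R.
Hypothesis R_total : forall x x', R x x' \/ x = x' \/ R x' x.

Definition fresh (x : X) (prev : forall x', R x' x -> option Y) (y : Y) : Prop :=
  Q y /\ forall x' (r : R x' x), prev x' r <> None /\ prev x' r <> Some y.

Definition enum_step (x : X) (prev : forall x', R x' x -> option Y) : option Y :=
  match excluded_middle_informative (exists y, fresh x prev y) with
  | left e => Some (proj1_sig (constructive_indefinite_description _ e))
  | right _ => None
  end.

Definition enum : X -> option Y := Fix R_wf (fun _ => option Y) enum_step.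

Lemma enum_eq (x : X) : enum x = enum_step x (fun x' _ => enum x').
Proof.
  apply (Fix_eq R_wf (fun _ => option Y) enum_step).
  intros x0 f g Hfg. f_equal.
  apply functional_extensionality_dep; intro x'.
  apply functional_extensionality_dep; intro r. apply Hfg.
Qed.

Lemma enum_Some (x : X) (y : Y) : enum x = Some y ->
  Q y /\ forall x', R x' x -> enum x' <> None /\ enum x' <> Some y.
Proof.
  rewrite enum_eq. unfold enum_step.
  destruct (excluded_middle_informative _) as [e|n]; [|discriminate].
  destruct (constructive_indefinite_description _ e) as [y' [Qy Hy]]; simpl.
  intros [= ->]. split; [exact Qy|]. intros x' r. exact (Hy x' r).
Qed.

Lemma enum_None (x : X) : enum x = None ->
  forall y, Q y -> exists x', R x' x /\ (enum x' = None \/ enum x' = Some y).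
Proof.
  rewrite enum_eq. unfold enum_step.
  destruct (excluded_middle_informative _) as [e|n]; [discriminate|].
  intros _ y Qy. apply NNPP; intro C. apply n. exists y. split; [exact Qy|].
  intros x' r. split; intro E; apply C; exists x'; auto.
Qed.

Lemma enum_total_injective (F : X -> Y) : (forall x, enum x = Some (F x)) ->
  forall x1 x2, F x1 = F x2 -> x1 = x2.
Proof.
  intros HF x1 x2 E.
  destruct (R_total x1 x2) as [r|[e|r]]; [exfalso| exact e |exfalso].
  - apply (proj2 (proj2 (enum_Some x2 _ (HF x2)) x1 r)). rewrite HF, E. reflexivity.
  - apply (proj2 (proj2 (enum_Some x1 _ (HF x1)) x2 r)). rewrite HF, E. reflexivity.
Qed.

Theorem wo_injects_or_bounded :
  (exists F : X -> Y, (forall x, Q (F x)) /\ forall x1 x2, F x1 = F x2 -> x1 = x2) \/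
  (exists x (h : Y -> X), (forall y, Q y -> R (h y) x) /\ inj_on Q h).
Proof.
  destruct (classic (exists x, enum x = None)) as [[x0 Hx0]|Htotal].
  - right.
    destruct (well_founded_minimal X R (fun x => enum x = None) R_wf x0 Hx0)
      as [x [Hx Hmin]].
    assert (Hh : forall y, exists x', Q y -> R x' x /\ enum x' = Some y).
    { intro y. destruct (classic (Q y)) as [Qy|nQy]; [|exists x; contradiction].
      destruct (enum_None x Hx y Qy) as [x' [r [E|E]]].
      - exfalso. exact (Hmin x' r E).
      - exists x'. auto. }
    destruct (choice _ Hh) as [h Hh']. exists x, h. split.
    + intros y Qy. apply (Hh' y Qy).
    + intros y1 y2 Q1 Q2 E.
      destruct (Hh' y1 Q1) as [_ E1], (Hh' y2 Q2) as [_ E2].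
      rewrite E, E2 in E1. congruence.
  - left. assert (Hs : forall x, exists y, enum x = Some y).
    { intro x. destruct (enum x) as [y|] eqn:E; [eauto|]. exfalso; eauto. }
    destruct (choice _ Hs) as [F HF]. exists F. split.
    + intro x. exact (proj1 (enum_Some x _ (HF x))).
    + exact (enum_total_injective F HF).
Qed.

End Enumeration.

Section WellOrder.

Variables (W : Type) (lt : W -> W -> Prop).
Hypothesis lt_wo : strict_well_order lt.

Definition le_of (x y : W) : Prop := lt x y \/ x = y.

Definition max_of (a b : W) : W :=
  if excluded_middle_informative (lt a b) then b else a.

Lemma wo_lt_total x y : lt x y \/ x = y \/ lt y x.
Proof. apply lt_wo. Qed.

Lemma wo_lt_trans x y z : lt x y -> lt y z -> lt x z.
Proof. apply lt_wo. Qed.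

Lemma wo_not_lt_le x y : ~ lt x y -> le_of y x.
Proof.
  intro n. destruct (wo_lt_total x y) as [h|[h|h]]; [contradiction|right|left]; auto.
Qed.

Lemma wo_le_trans x y z : le_of x y -> le_of y z -> le_of x z.
Proof.
  intros [h|<-] [k|<-]; [left; eapply wo_lt_trans; eauto|left|left|right]; auto.
Qed.

Lemma wo_le_lt_trans x y z : le_of x y -> lt y z -> lt x z.
Proof. intros [h|<-] k; [eapply wo_lt_trans|]; eauto. Qed.

Lemma le_max_of_l a b : le_of a (max_of a b).
Proof.
  unfold max_of. destruct (excluded_middle_informative (lt a b)); [left|right]; auto.
Qed.

Lemma le_max_of_r a b : le_of b (max_of a b).
Proof.
  unfold max_of. destruct (excluded_middle_informative (lt a b)); [right|]; auto.
  now apply wo_not_lt_le.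
Qed.

Lemma le_segment_inj_on (K : Type) (m : W) :
  (exists e : W -> K, inj_on (fun x => lt x m) e) ->
  exists e : W -> option K, inj_on (fun x => le_of x m) e.
Proof.
  intros [e He].
  exists (fun x => if excluded_middle_informative (lt x m) then Some (e x) else None).
  intros x y Hx Hy.
  destruct (excluded_middle_informative (lt x m)) as [a1|a1];
  destruct (excluded_middle_informative (lt y m)) as [a2|a2]; intro E;
    try discriminate.
  - injection E. apply He; auto.
  - destruct Hx, Hy; congruence.
Qed.

Definition godel_key (p : W * W) : W * (W * W) := (max_of (fst p) (snd p), p).

Definition godel_lt (p q : W * W) : Prop :=
  slexprod W (W * W) lt (slexprod W W lt lt) (godel_key p) (godel_key q).

Lemma godel_wf : well_founded godel_lt.
Proof.
  apply (wf_inverse_image _ _ _ godel_key).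
  destruct lt_wo as [_ [_ [_ wf]]]. now apply wf_slexprod; [|apply wf_slexprod].
Qed.

Lemma godel_total p q : godel_lt p q \/ p = q \/ godel_lt q p.
Proof.
  destruct (slexprod_total _ _ _ _ wo_lt_total (slexprod_total _ _ _ _ wo_lt_total wo_lt_total)
              (godel_key p) (godel_key q)) as [h|[h|h]]; auto.
  right; left. exact (f_equal snd h).
Qed.

Lemma godel_lt_le_max p q : godel_lt q p ->
  le_of (fst q) (max_of (fst p) (snd p)) /\ le_of (snd q) (max_of (fst p) (snd p)).
Proof.
  intro H.
  assert (Hm : le_of (max_of (fst q) (snd q)) (max_of (fst p) (snd p))).
  { inversion H; [left|right]; auto. }
  split; eapply wo_le_trans; [apply le_max_of_l|exact Hm|apply le_max_of_r|exact Hm].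
Qed.

Theorem wo_square_injects (K : Type) :
  (forall a, exists e : W -> K, inj_on (fun x => lt x a) e) ->
  ~ injects W K -> injects (K * K) K -> injects (option K) K ->
  injects (W * W) W.
Proof.
  intros Hseg HWK HKK HoK.
  destruct (wo_injects_or_bounded (W * W) W godel_lt (fun _ => True) godel_wf godel_total)
    as [[F [_ HF]]|[x [h [Hh Hinj]]]]; [exists F; exact HF|].
  exfalso. apply HWK.
  set (m := max_of (fst x) (snd x)).
  destruct (le_segment_inj_on K m (Hseg m)) as [e He].
  apply injects_trans with (option K * option K)%type;
    [|apply injects_trans with (K * K)%type; [apply injects_prod|]; assumption].
  exists (fun y => (e (fst (h y)), e (snd (h y)))).
  intros y1 y2 E. injection E as E1 E2. apply Hinj; trivial.
  destruct (godel_lt_le_max x (h y1) (Hh y1 I)), (godel_lt_le_max x (h y2) (Hh y2 I)).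
  destruct (h y1), (h y2). simpl in *. f_equal; apply He; auto.
Qed.

End WellOrder.

Section KurepaTree.

Variables (W1 : Type) (lt1 : W1 -> W1 -> Prop) (W2 : Type) (lt2 : W2 -> W2 -> Prop).
Hypothesis H1 : is_omega1 W1 lt1.
Hypothesis H2 : is_omega2 W1 W2 lt2.

Lemma omega1_two_points : exists a b : W1, a <> b.
Proof.
  apply NNPP; intro C. apply (proj2 (proj2 H1)). exists (fun _ => 0).
  intros x y _. apply NNPP; intro D. apply C. eauto.
Qed.

Lemma omega1_segment_inj_on a : exists e : W1 -> nat, inj_on (fun x => lt1 x a) e.
Proof. apply inj_on_of_injects_sig; [exact 0|]. apply H1. Qed.

Lemma omega1_square : injects (W1 * W1) W1.
Proof.
  apply (wo_square_injects W1 lt1 (proj1 H1) nat omega1_segment_inj_on).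
  - apply H1.
  - exact nat_square_injects.
  - exact option_nat_injects.
Qed.

Lemma omega1_option : injects (option W1) W1.
Proof.
  destruct omega1_two_points as [a [b ab]].
  exact (option_injects_of_square W1 a b ab omega1_square).
Qed.

Lemma omega2_segment_inj_on a : exists e : W2 -> W1, inj_on (fun x => lt2 x a) e.
Proof.
  destruct omega1_two_points as [w _].
  apply inj_on_of_injects_sig; [exact w|]. apply H2.
Qed.

Lemma omega2_square : injects (W2 * W2) W2.
Proof.
  apply (wo_square_injects W2 lt2 (proj1 H2) W1 omega2_segment_inj_on).
  - apply H2.
  - exact omega1_square.
  - exact omega1_option.
Qed.

Lemma omega1_injects_omega2 : injects W1 W2.
Proof.
  pose proof H1 as [[_ [_ [tot1 wf1]]] _].
  destruct (wo_injects_or_bounded W1 W2 lt1 (fun _ => True) wf1 tot1)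
    as [[F [_ HF]]|[x [h [_ Hh]]]]; [exists F; exact HF|].
  exfalso. apply (proj2 (proj2 H2)). exists h. intros a b. apply Hh; trivial.
Qed.

Lemma omega2_absorbs : injects (W2 * W2 * W1 * W1) W2.
Proof.
  pose proof omega1_injects_omega2. pose proof omega2_square.
  apply injects_trans with (W2 * W2)%type; [apply injects_prod|]; trivial.
  apply injects_trans with (W2 * W2)%type; [apply injects_prod|]; trivial.
Qed.

Theorem omega2_bounded (K : Type) :
  injects K W1 -> forall g : K -> W2, exists b, forall k, lt2 (g k) b.
Proof.
  intros HK g. apply NNPP; intro C.
  assert (Hk : forall b, exists k, ~ lt2 (g k) b).
  { intro b. apply NNPP; intro D. apply C. exists b. intro k.
    apply NNPP; intro E. apply D; eauto. }
  destruct (choice _ Hk) as [kf Hkf].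
  assert (Hseg : forall a, exists e : W2 -> option W1, inj_on (fun x => le_of W2 lt2 x a) e).
  { intro a. exact (le_segment_inj_on W2 lt2 W1 a (omega2_segment_inj_on a)). }
  destruct (choice _ Hseg) as [e He].
  apply (proj2 (proj2 H2)).
  apply injects_trans with (K * option W1)%type.
  - exists (fun b => (kf b, e (g (kf b)) b)).
    intros b1 b2 E. injection E as Ek Ee. rewrite <- Ek in Ee.
    apply (He (g (kf b1))); trivial;
      apply (wo_not_lt_le W2 lt2 (proj1 H2)); [|rewrite Ek]; apply Hkf.
  - apply injects_trans with (W1 * W1)%type; [apply injects_prod|]; trivial.
    + exact omega1_option.
    + exact omega1_square.
Qed.

Variables (N : Type) (ltT : N -> N -> Prop) (ht : N -> W2) (tau : W2 -> W1 -> N).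
Hypothesis HT : tree_of_height lt2 ltT ht.
Hypothesis tau_level : forall alpha xi, ht (tau alpha xi) = alpha.
Hypothesis tau_onto : forall alpha t, ht t = alpha -> exists xi, tau alpha xi = t.

Lemma branch_below_shared_node (B1 B2 : N -> Prop) t u :
  cofinal_branch ltT ht B1 -> cofinal_branch ltT ht B2 ->
  B1 u -> B2 u -> lt2 (ht t) (ht u) -> B1 t -> B2 t.
Proof.
  intros [chain1 _] [_ [down2 _]] u1 u2 L t1.
  destruct H2 as [[irr2 [trans2 _]] _].
  destruct (chain1 t u t1 u1) as [x|[->|x]].
  - exact (down2 t u u2 x).
  - exact u2.
  - exfalso. apply (irr2 (ht t)). apply (trans2 _ (ht u)); [exact L|].
    apply HT. exact x.
Qed.

Lemma branch_val_exists (B : N -> Prop) beta :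
  cofinal_branch ltT ht B -> exists xi, branch_val lt1 tau B beta xi.
Proof.
  intros [_ [_ Hlevel]]. pose proof H1 as [[_ [_ [_ wf1]]] _].
  destruct (Hlevel beta) as [u [Bu hu]].
  destruct (tau_onto beta u hu) as [xi0 <-].
  exact (well_founded_minimal W1 lt1 (fun xi => B (tau beta xi)) wf1 xi0 Bu).
Qed.

Definition oscillation_fails_at (A : W2 -> Prop) (B : N -> Prop) alpha zeta : Prop :=
  forall beta xi, lt2 alpha beta -> A beta -> branch_val lt1 tau B beta xi ->
    ~ lt1 zeta xi.

Lemma not_oscillates_fails_at (A : W2 -> Prop) (B : N -> Prop) :
  ~ oscillates lt1 lt2 tau B A -> exists alpha zeta, oscillation_fails_at A B alpha zeta.
Proof.
  intro Hn. apply NNPP; intro C. apply Hn. intros alpha zeta.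
  apply NNPP; intro D. apply C. exists alpha, zeta.
  intros beta xi L Ab bv Lz. apply D. exists beta, xi. auto.
Qed.

Lemma omega1_branches_split_below (F : W1 -> N -> Prop) :
  (forall i j, F i = F j -> i = j) ->
  exists b0, forall i j, i <> j -> exists d, lt2 (ht d) b0 /\ ~ (F i d <-> F j d).
Proof.
  intro Finj.
  assert (HD : forall p : {p : W1 * W1 | fst p <> snd p},
             exists d, ~ (F (fst (proj1_sig p)) d <-> F (snd (proj1_sig p)) d)).
  { intros [[i j] ne]. simpl in *. apply NNPP; intro C. apply ne, Finj.
    apply functional_extensionality; intro d. apply propositional_extensionality.
    apply NNPP; intro D. apply C. eauto. }
  destruct (choice _ HD) as [D HDp].
  assert (Hpairs : injects {p : W1 * W1 | fst p <> snd p} W1).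
  { apply injects_trans with (W1 * W1)%type; [|exact omega1_square].
    exists (@proj1_sig _ _). intros [p Hp] [q Hq] E. simpl in E. subst q.
    f_equal. apply proof_irrelevance. }
  destruct (omega2_bounded _ Hpairs (fun p => ht (D p))) as [b0 Hb0].
  exists b0. intros i j ne. exists (D (exist _ (i, j) ne)). split; [apply Hb0|].
  exact (HDp (exist _ (i, j) ne)).
Qed.

Lemma no_omega1_failing_branches (A : W2 -> Prop) alpha zeta :
  unbounded lt2 A ->
  ~ exists F : W1 -> N -> Prop,
      (forall i, cofinal_branch ltT ht (F i) /\ oscillation_fails_at A (F i) alpha zeta) /\
      (forall i j, F i = F j -> i = j).
Proof.
  intros HA [F [HF Finj]].
  destruct (omega1_branches_split_below F Finj) as [b0 Hb0].
  destruct (HA (max_of W2 lt2 b0 alpha)) as [b1 [Hb1 Ab1]].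
  assert (above : forall b, le_of W2 lt2 b (max_of W2 lt2 b0 alpha) -> lt2 b b1).
  { intros b Hb. exact (wo_le_lt_trans W2 lt2 (proj1 H2) _ _ _ Hb Hb1). }
  assert (Hv : forall i, exists xi, branch_val lt1 tau (F i) b1 xi).
  { intro i. apply branch_val_exists, HF. }
  destruct (choice _ Hv) as [v Hvp].
  assert (v_le : forall i, le_of W1 lt1 (v i) zeta).
  { intro i. apply (wo_not_lt_le W1 lt1 (proj1 H1)).
    apply (proj2 (HF i) b1); [apply above, (le_max_of_r W2 lt2 (proj1 H2)) | exact Ab1 | apply Hvp]. }
  assert (v_inj : forall i j, v i = v j -> i = j).
  { intros i j E. apply NNPP; intro ne. destruct (Hb0 i j ne) as [d [Hd Hdiff]].
    assert (Hdu : lt2 (ht d) (ht (tau b1 (v i)))).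
    { rewrite tau_level. apply (wo_lt_trans W2 lt2 (proj1 H2)) with b0; [exact Hd|].
      apply above, le_max_of_l. }
    pose proof (proj1 (Hvp i)) as Hi. pose proof (proj1 (Hvp j)) as Hj.
    rewrite <- E in Hj.
    apply Hdiff; split; apply branch_below_shared_node with (u := tau b1 (v i));
      solve [apply HF | assumption]. }
  destruct (le_segment_inj_on W1 lt1 nat zeta (omega1_segment_inj_on zeta)) as [e He].
  apply (proj2 (proj2 H1)).
  apply injects_trans with (option nat)%type; [|exact option_nat_injects].
  exists (fun i => e (v i)). intros i j E. apply v_inj, He; auto.
Qed.

Lemma failing_branches_inj_on (A : W2 -> Prop) alpha zeta : unbounded lt2 A ->
  exists e : (N -> Prop) -> W1,
    inj_on (fun B => cofinal_branch ltT ht B /\ oscillation_fails_at A B alpha zeta) e.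
Proof.
  intro HA. pose proof H1 as [[_ [_ [tot1 wf1]]] _].
  destruct (wo_injects_or_bounded W1 (N -> Prop) lt1
              (fun B => cofinal_branch ltT ht B /\ oscillation_fails_at A B alpha zeta)
              wf1 tot1) as [HF|[x [h [_ Hh]]]]; [|eauto].
  exfalso. exact (no_omega1_failing_branches A alpha zeta HA HF).
Qed.

End KurepaTree.

Lemma kurepa_branches_not_inj_on (W1 W2 N : Type) (lt2 : W2 -> W2 -> Prop)
  (ltT : N -> N -> Prop) (ht : N -> W2) :
  @kurepa_tree W1 W2 N lt2 ltT ht ->
  ~ exists f : (N -> Prop) -> W2, inj_on (cofinal_branch ltT ht) f.
Proof.
  intros [_ [_ Hk]] [f Hf]. destruct (Hk f) as [B1 [B2 [c1 [c2 [[t Ht] E]]]]].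
  apply Ht. rewrite (Hf B1 B2 c1 c2 E). tauto.
Qed.

Theorem lemma9 (W1 : Type) (lt1 : W1 -> W1 -> Prop)
  (W2 : Type) (lt2 : W2 -> W2 -> Prop)
  (N : Type) (ltT : N -> N -> Prop) (ht : N -> W2)
  (tau : W2 -> W1 -> N) (A : W2 -> W2 -> Prop) :
  is_omega1 W1 lt1 ->
  is_omega2 W1 W2 lt2 ->
  @kurepa_tree W1 W2 N lt2 ltT ht ->
  (forall alpha xi, ht (tau alpha xi) = alpha) ->
  (forall alpha t, ht t = alpha -> exists xi, tau alpha xi = t) ->
  (forall iota, unbounded lt2 (A iota)) ->
  exists B : N -> Prop, cofinal_branch ltT ht B /\
    forall iota, oscillates lt1 lt2 tau B (A iota).
Proof.
  intros H1 H2 HK tau_level tau_onto HA.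
  apply NNPP; intro Hnone.
  apply (kurepa_branches_not_inj_on W1 W2 N lt2 ltT ht HK).
  apply (inj_on_of_fibers _ (W2 * W2 * W1) W1 W2 _
           (fun t B => cofinal_branch ltT ht B /\
              oscillation_fails_at W1 lt1 W2 lt2 N tau (A (fst (fst t))) B
                (snd (fst t)) (snd t))).
  - destruct (omega1_two_points W1 lt1 H1) as [w _].
    destruct (omega1_injects_omega2 W1 lt1 W2 lt2 H1 H2) as [j _].
    exact (inhabits (j w, j w, w)).
  - intros B HB. apply NNPP; intro C. apply Hnone. exists B. split; [exact HB|].
    intro iota. apply NNPP; intro Hosc.
    destruct (not_oscillates_fails_at W1 lt1 W2 lt2 N tau (A iota) B Hosc)
      as [alpha [zeta Hfail]].
    apply C. exists (iota, alpha, zeta). split; assumption.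
  - intros [[iota alpha] zeta].
    exact (failing_branches_inj_on W1 lt1 W2 lt2 H1 H2 N ltT ht tau (proj1 HK)
             tau_level tau_onto (A iota) alpha zeta (HA iota)).
  - exact (omega2_absorbs W1 lt1 W2 lt2 H1 H2).
Qed.
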